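(* Assume $h$ satisfies Assumption 1. If $R\le c/\delta$, then $\hat B^d=B^d$ and $\hat\epsilon(x,i)=0$ for all $i\in\{0,1\}$ and $x=0,1,\dots,B^s$.
   Context: Parameters: $\lambda>0$, $0<\mu_l<\mu_h$, $\delta=\mu_h-\mu_l$, $\Lambda=\lambda+\mu_h$, $R\ge 0$, $c>0$, discount rate $\beta>0$ with the normalization $\Lambda+\beta=1$, and $h:\{0,1,2,\dots\}\to\mathbb{R}$ nondecreasing and convex with $h(0)=0$. Assumption 1: (1) there is $\theta>1$ with $h(x+1)\le\theta h(x)$ for all $x>0$; (2) there exist $\gamma\in[0,1)$ and a positive integer $J$ with $\left(\frac{\Lambda}{\Lambda+\beta}\right)^J[R+c+h(x+J)]\le\gamma[R+c+h(x)]$ for all $x\ge0$. Combined problem finite-horizon values on $S=\{0,1,\dots\}\times\{0,1\}$: $v_0\equiv0$, $v_{n+1}(0,0)=\lambda v_n(0,1)+\mu_h v_n(0,0)$; $v_{n+1}(x,0)=-h(x)+\lambda v_n(x,1)+\mu_l v_n(x-1,0)+\max\{\delta v_n(x,0),-c+\delta v_n(x-1,0)\}$ for $x\ge1$; $v_{n+1}(x,1)=\max\{R+v_{n+1}(x+1,0),v_{n+1}(x,0)\}$. Admission-control subproblem: $\hat v$ defined identically except that the max in the $(x,0)$ equation is replaced by $\delta\hat v_n(x,0)$ (service rate always $\mu_l$). Infinite-horizon values: $v=\lim_n v_n$ and $\hat v=\lim_n\hat v_n$ (pointwise limits, which exist under Assumption 1). $\hat\epsilon(x,i)=v(x,i)-\hat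 v(x,i)$. With $\Delta(x,0)=v(x,0)-v(x+1,0)$, $\hat\Delta(x,0)=\hat v(x,0)-\hat v(x+1,0)$ and $T_f(\theta)=\sup\{k\ge0:f(k)\le\theta\}$ ($\sup\emptyset=-1$, $+\infty$ allowed), the thresholds are $B^s=1+T_{\Delta(\cdot,0)}(c/\delta)$, $B^d=T_{\Delta(\cdot,0)}(R)$ and $\hat B^d=T_{\hat\Delta(\cdot,0)}(R)$. *)

From Stdlib Require Import Reals ZArith Classical ClassicalEpsilon.
Open Scope R_scope.

(* Finite-horizon values of the combined problem.  The pair is
   (x |-> v_n(x,0), x |-> v_n(x,1)).  [Rw] is the reward R of the paper. *)
Fixpoint vpair (lam mul muh Rw c : R) (h : nat -> R) (n : nat)
  : (nat -> R) * (nat -> R) :=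
  match n with
  | O => (fun _ => 0, fun _ => 0)
  | S m =>
      let p := vpair lam mul muh Rw c h m in
      let a := fst p in let b := snd p in
      let delta := muh - mul in
      let a' := fun x => match x with
                 | O => lam * b O + muh * a O
                 | S y => - h x + lam * b x + mul * a y
                          + Rmax (delta * a x) (- c + delta * a y)
                 end in
      (a', fun x => Rmax (Rw + a' (S x)) (a' x))
  end.

(* Admission-control subproblem: service rate always mu_l. *)
Fixpoint vhpair (lam mul muh Rw c : R) (h : nat -> R) (n : nat)
  : (nat -> R) * (nat -> R) :=
  match n with
  | O => (fun _ => 0, fun _ => 0)
  | S m =>
      let p := vhpair lam mul muh Rw c h m in
      let a := fst p in let b := snd p in
      let delta := muh - mul in
      let a' := fun x => match x with
                 | O => lam * b O + muh * a O
                 | S y => - h x + lam * b x + mul * a y + delta * a x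
                 end in
      (a', fun x => Rmax (Rw + a' (S x)) (a' x))
  end.

(* State (x,i) with i : bool, false = 0, true = 1. *)
Definition vn lam mul muh Rw c h n (x : nat) (i : bool) : R :=
  if i then snd (vpair lam mul muh Rw c h n) x
  else fst (vpair lam mul muh Rw c h n) x.

Definition vhn lam mul muh Rw c h n (x : nat) (i : bool) : R :=
  if i then snd (vhpair lam mul muh Rw c h n) x
  else fst (vhpair lam mul muh Rw c h n) x.

Inductive ext : Type := EFin (z : Z) | EInf.

(* t = sup{k >= 0 : f k <= th}, with sup ∅ = -1 and +∞ allowed. *)
Definition is_T (f : nat -> R) (th : R) (t : ext) : Prop :=
  match t with
  | EInf => forall m : nat, exists k : nat, (m <= k)%nat /\ f k <= th
  | EFin z => (z = (-1)%Z /\ forall k : nat, th < f k)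
              \/ (exists k : nat, z = Z.of_nat k /\ f k <= th /\
                     forall j : nat, (k < j)%nat -> th < f j)
  end.

Definition T_thr (f : nat -> R) (th : R) : ext :=
  epsilon (inhabits EInf) (is_T f th).

Definition ext_add1 (t : ext) : ext :=
  match t with EFin z => EFin (z + 1)%Z | EInf => EInf end.

Definition nat_le_ext (x : nat) (t : ext) : Prop :=
  match t with EFin z => (Z.of_nat x <= z)%Z | EInf => True end.

From Stdlib Require Import Reals ZArith.
From Stdlib Require Import Lra Lia Classical ClassicalEpsilon.
Open Scope R_scope.

(* Write e(x) = v(x,0) - vh(x,0) and e1(x) = v(x,1) - vh(x,1)
   for the error of the admission-control subproblem.
   1. Value iteration preserves, for every horizon n: concavity and
      monotonicity of v_n(.,i), the domination vh_n <= v_n, the comparison of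
      decrements v_n(x)-v_n(x+1) <= vh_n(x)-vh_n(x+1), an upper bound on v_n and
      a lower bound on vh_n proportional to h.  All these, and the Bellman
      equations, pass to the pointwise limits (record [ValueFacts]).
   2. From these facts, e >= 0 is nondecreasing in x.  At a state x0 where
      admission is rejected (Delta(x0) > R) but slow service is optimal one step
      below (Delta(x0-1) <= c/delta), the Bellman equations give
      e(x0) <= (lam+muh) e(x0), hence e(x0) = 0, and then e = e1 = 0 on [0,x0].
      If slow service is optimal everywhere, e(x) <= (lam+muh) e(x+1), and
      Assumption 1(2) with the linear growth of e forces e = 0 everywhere.
   3. Taking x0 = B^s gives the second claim; since Delta <= Deltah, with
      equality wherever Delta <= R <= c/delta, both thresholds at level R agree. *)

Ltac destruct_Rmax := unfold Rmax in *; repeat match goal with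
  | |- context [Rle_dec ?a ?b] => destruct (Rle_dec a b)
  | H : context [Rle_dec ?a ?b] |- _ => destruct (Rle_dec a b)
  end.

(* If f exceeds th from some index on, the threshold is finite (the last
   index below m where f <= th, or -1). *)
Lemma is_T_finite_tail (f : nat -> R) (th : R) :
  forall m, (forall k, (m <= k)%nat -> th < f k) -> exists z, is_T f th (EFin z).
Proof.
  induction m as [|m IH]; intros Htail.
  - exists (-1)%Z. left. split; [reflexivity|]. intro k; apply Htail; lia.
  - destruct (Rlt_le_dec th (f m)) as [Hlt|Hle].
    + apply IH. intros k Hk.
      destruct (Nat.eq_dec k m); [subst; exact Hlt|apply Htail; lia].
    + exists (Z.of_nat m). right. exists m. repeat split; [exact Hle|].
      intros j Hj; apply Htail; lia.
Qed.

Lemma is_T_exists (f : nat -> R) (th : R) : exists t, is_T f th t.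
Proof.
  destruct (classic (forall m : nat, exists k : nat, (m <= k)%nat /\ f k <= th))
    as [Hinf|Hfin].
  - exists EInf. exact Hinf.
  - apply not_all_ex_not in Hfin. destruct Hfin as [m Hm].
    destruct (is_T_finite_tail f th m) as [z Hz].
    + intros k Hk. destruct (Rlt_le_dec th (f k)) as [|Hle]; [assumption|].
      exfalso; apply Hm. exists k; auto.
    + exists (EFin z); exact Hz.
Qed.

Lemma is_T_unique (f : nat -> R) (th : R) (t1 t2 : ext) :
  is_T f th t1 -> is_T f th t2 -> t1 = t2.
Proof.
  assert (Hinf : forall z, is_T f th EInf -> is_T f th (EFin z) -> False).
  { intros z H1 [[_ H2]|(k & _ & _ & H2)].
    - destruct (H1 0%nat) as (k & _ & Hk). specialize (H2 k). lra.
    - destruct (H1 (S k)) as (j & Hj & Hk). specialize (H2 j ltac:(lia)). lra. }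
  destruct t1 as [z1|], t2 as [z2|]; intros H1 H2; auto.
  - destruct H1 as [[-> A1]|(k1 & -> & B1 & C1)];
      destruct H2 as [[-> A2]|(k2 & -> & B2 & C2)]; auto.
    + specialize (A1 k2); lra.
    + specialize (A2 k1); lra.
    + destruct (lt_eq_lt_dec k1 k2) as [[Hlt|Heq]|Hlt].
      * specialize (C1 k2 Hlt); lra.
      * subst; reflexivity.
      * specialize (C2 k1 Hlt); lra.
  - exfalso; eapply Hinf; eauto.
  - exfalso; eapply Hinf; eauto.
Qed.

Lemma T_thr_spec (f : nat -> R) (th : R) : is_T f th (T_thr f th).
Proof. unfold T_thr. apply epsilon_spec, is_T_exists. Qed.

Lemma T_thr_eq (f : nat -> R) (th : R) (t : ext) : is_T f th t -> T_thr f th = t.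
Proof. intros Ht. exact (is_T_unique f th _ _ (T_thr_spec f th) Ht). Qed.

Lemma is_T_below (f : nat -> R) (th : R) (t : ext) (x : nat) :
  is_T f th t -> f x <= th -> nat_le_ext x t.
Proof.
  intros Ht Hx. destruct t as [z|]; simpl; [|exact I].
  destruct Ht as [[_ Hall]|(k & -> & _ & Hj)].
  - specialize (Hall x). lra.
  - destruct (le_lt_dec x k) as [Hxk|Hkx]; [lia|].
    specialize (Hj x Hkx). lra.
Qed.

Lemma is_T_inf_bounded (f : nat -> R) (th : R) :
  (forall x, f x <= f (S x)) -> is_T f th EInf -> forall x, f x <= th.
Proof.
  intros Hmono Ht x. destruct (Ht x) as (k & Hxk & Hk).
  enough (f x <= f k) by lra.
  induction Hxk as [|k Hxk IH]; [lra|]. specialize (Hmono k). lra.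
Qed.

Lemma is_T_transfer (f g : nat -> R) (th : R) (t : ext) :
  (forall x, f x <= g x) -> (forall x, f x <= th -> g x = f x) ->
  is_T f th t -> is_T g th t.
Proof.
  intros Hfg Heq Ht. destruct t as [z|].
  - destruct Ht as [[-> Hall]|(k & -> & Hk & Hj)].
    + left. split; [reflexivity|]. intro k. specialize (Hall k). specialize (Hfg k). lra.
    + right. exists k. repeat split; [rewrite (Heq k Hk); exact Hk|].
      intros j Hkj. specialize (Hj j Hkj). specialize (Hfg j). lra.
  - intro m. destruct (Ht m) as (k & Hmk & Hk). exists k. split; [exact Hmk|].
    rewrite (Heq k Hk). exact Hk.
Qed.

Lemma nat_le_ext_succ (x : nat) (t : ext) :
  nat_le_ext x t -> nat_le_ext (S x) (ext_add1 t).
Proof. destruct t; simpl; [lia|auto]. Qed.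

Lemma nat_le_ext_pred (x : nat) (t : ext) : nat_le_ext (S x) t -> nat_le_ext x t.
Proof. destruct t; simpl; [lia|auto]. Qed.

Lemma cv_const (k : R) : Un_cv (fun _ => k) k.
Proof.
  intros eps Heps. exists 0%nat. intros n _.
  unfold R_dist. rewrite Rminus_diag, Rabs_R0. exact Heps.
Qed.

Lemma cv_shift (u : nat -> R) (l : R) : Un_cv u l -> Un_cv (fun n => u (S n)) l.
Proof. intros Hu eps Heps. destruct (Hu eps Heps) as [N HN]. exists N. intros n Hn. apply HN. lia. Qed.

Lemma cv_scal (k : R) (u : nat -> R) (l : R) : Un_cv u l -> Un_cv (fun n => k * u n) (k * l).
Proof. exact (CV_mult _ _ _ _ (cv_const k)). Qed.

Lemma cv_max (u w : nat -> R) (l m : R) :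
  Un_cv u l -> Un_cv w m -> Un_cv (fun n => Rmax (u n) (w n)) (Rmax l m).
Proof.
  intros Hu Hw eps Heps. destruct (Hu eps Heps) as [N1 H1]. destruct (Hw eps Heps) as [N2 H2].
  exists (max N1 N2). intros n Hn.
  specialize (H1 n ltac:(lia)). specialize (H2 n ltac:(lia)).
  unfold R_dist in *. destruct_Rmax; split_Rabs; lra.
Qed.

Lemma cv_pow0 (q : R) : 0 <= q < 1 -> Un_cv (fun k => q ^ k) 0.
Proof.
  intros Hq eps Heps.
  destruct (pow_lt_1_zero q ltac:(rewrite Rabs_pos_eq; lra) eps Heps) as [N HN].
  exists N. intros n Hn. unfold R_dist. rewrite Rminus_0_r. apply HN; lia.
Qed.

Lemma backward_recursion_nonpos (e g : nat -> R) (rho gamma C K L : R) (J : nat) :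
  0 <= rho -> rho ^ J < 1 -> 0 <= gamma < 1 -> 0 <= C -> 0 <= L ->
  (forall y, e y <= rho * e (S y)) ->
  (forall x, e x <= K + L * g x) ->
  (forall x, rho ^ J * (C + g (x + J)%nat) <= gamma * (C + g x)) ->
  forall x, e x <= 0.
Proof.
  intros Hrho HrhoJ Hgamma HC HL Hrec Hgrowth Hshrink x.
  set (q := rho ^ J).
  assert (Hq : 0 <= q < 1) by (split; [apply pow_le|]; assumption).
  assert (Hiter : forall m y, e y <= rho ^ m * e (y + m)%nat).
  { induction m as [|m IH]; intro y.
    - rewrite Nat.add_0_r. simpl. lra.
    - replace (y + S m)%nat with (S (y + m)) by lia.
      specialize (IH y). specialize (Hrec (y + m)%nat).
      pose proof (Rmult_le_compat_l (rho ^ m) _ _ (pow_le rho m Hrho) Hrec).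
      simpl. lra. }
  assert (Hshrink_k : forall k y, q ^ k * (C + g (y + J * k)%nat) <= gamma ^ k * (C + g y)).
  { induction k as [|k IH]; intro y.
    - rewrite Nat.mul_0_r, Nat.add_0_r. simpl. lra.
    - replace (y + J * S k)%nat with ((y + J * k) + J)%nat by lia.
      specialize (IH y). specialize (Hshrink (y + J * k)%nat).
      pose proof (Rmult_le_compat_l (q ^ k) _ _ (pow_le q k (proj1 Hq)) Hshrink).
      pose proof (Rmult_le_compat_l gamma _ _ (proj1 Hgamma) IH).
      fold q in Hshrink, H. simpl. lra. }
  assert (Hbound : forall k, e x <= q ^ k * K + L * (gamma ^ k * (C + g x))).
  { intro k.
    pose proof (Hiter (J * k)%nat x) as Hi. rewrite pow_mult in Hi. fold q in Hi.
    specialize (Hgrowth (x + J * k)%nat). specialize (Hshrink_k k x).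
    pose proof (pow_le q k (proj1 Hq)) as Hqk.
    pose proof (Rmult_le_compat_l (q ^ k) _ _ Hqk Hgrowth).
    pose proof (Rmult_le_compat_l L _ _ HL Hshrink_k).
    assert (0 <= q ^ k * (L * C)) by (apply Rmult_le_pos; [|apply Rmult_le_pos]; lra).
    assert (L * (q ^ k * (C + g (x + J * k)%nat))
            = q ^ k * (L * C) + q ^ k * (L * g (x + J * k)%nat)) by ring.
    assert (q ^ k * (K + L * g (x + J * k)%nat)
            = q ^ k * K + q ^ k * (L * g (x + J * k)%nat)) by ring.
    lra. }
  assert (Hlim : Un_cv (fun k => q ^ k * K + L * (gamma ^ k * (C + g x)))
                       (0 * K + L * (0 * (C + g x)))).
  { apply CV_plus; [apply CV_mult; [apply cv_pow0; exact Hq|apply cv_const]|].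
    apply cv_scal, CV_mult; [apply cv_pow0; exact Hgamma|apply cv_const]. }
  pose proof (Rle_cv_lim Hbound (cv_const (e x)) Hlim). lra.
Qed.

(* With l + m + b = 1, the inequality (l+b) p <= l q implies p <= (l+m) q
   for q >= 0, because l/(l+b) <= l+m. *)
Lemma ratio_bound (l m b p q : R) :
  0 < l -> 0 < m -> 0 < b -> l + m + b = 1 -> 0 <= q ->
  (l + b) * p <= l * q -> p <= (l + m) * q.
Proof.
  intros Hl Hm Hb Hsum Hq H.
  assert (E : (l + m) * (l + b) = l + m * b) by (replace b with (1 - l - m) by lra; ring).
  assert (0 <= m * b * q) by (apply Rmult_le_pos; [apply Rmult_le_pos|]; lra).
  assert (0 <= (l + b) * ((l + m) * q - p)) by nra.
  nra.
Qed.

Definition concave_nonincr (a : nat -> R) : Prop :=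
  forall x, 0 <= a x - a (S x) <= a (S x) - a (S (S x)).

Definition decrements_le (a ah : nat -> R) : Prop :=
  forall x, a x - a (S x) <= ah x - ah (S x).

Definition dominated (ah a : nat -> R) : Prop := forall x, ah x <= a x.

Record ValueFacts (lam mul muh Rw c : R) (h : nat -> R) (v vh : nat -> bool -> R)
  : Prop := {
  vf_concave : forall x, v x false - v (S x) false <= v (S x) false - v (S (S x)) false;
  vf_decrements : forall x, v x false - v (S x) false <= vh x false - vh (S x) false;
  vf_dom0 : forall x, vh x false <= v x false;
  vf_dom1 : forall x, vh x true <= v x true;
  vf_growth : exists K L, 0 <= L /\ forall x, v x false - vh x false <= K + L * h x;
  vf_admit : forall x, v x true = Rmax (Rw + v (S x) false) (v x false);
  vf_admit_h : forall x, vh x true = Rmax (Rw + vh (S x) false) (vh x false);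
  vf_empty : v 0%nat false = lam * v 0%nat true + muh * v 0%nat false;
  vf_empty_h : vh 0%nat false = lam * vh 0%nat true + muh * vh 0%nat false;
  vf_busy : forall y, v (S y) false = - h (S y) + lam * v (S y) true + mul * v y false
              + Rmax ((muh - mul) * v (S y) false) (- c + (muh - mul) * v y false);
  vf_busy_h : forall y, vh (S y) false = - h (S y) + lam * vh (S y) true
              + mul * vh y false + (muh - mul) * vh (S y) false }.

Section ValueIteration.

Variables (lam mul muh Rw c beta : R) (h : nat -> R).
Hypotheses (Hlam : 0 < lam) (Hmul : 0 < mul) (Hmulh : mul < muh) (HRw : 0 <= Rw) (Hc : 0 < c)
  (Hbeta : 0 < beta) (Hnorm : lam + muh + beta = 1) (Hh0 : h 0%nat = 0)
  (Hhmono : forall x, h x <= h (S x))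
  (Hhconv : forall x, h (S x) - h x <= h (S (S x)) - h (S x)).

(* One step of value iteration, for the state without (stepA, stepAh) and
   with (stepB) an arriving customer. *)
Definition stepA (a b : nat -> R) : nat -> R := fun x =>
  match x with
  | O => lam * b O + muh * a O
  | S y => - h x + lam * b x + mul * a y
           + Rmax ((muh - mul) * a x) (- c + (muh - mul) * a y)
  end.

Definition stepAh (a b : nat -> R) : nat -> R := fun x =>
  match x with
  | O => lam * b O + muh * a O
  | S y => - h x + lam * b x + mul * a y + (muh - mul) * a x
  end.

Definition stepB (a : nat -> R) : nat -> R := fun x => Rmax (Rw + a (S x)) (a x).

Local Notation A n := (fst (vpair lam mul muh Rw c h n)).
Local Notation B n := (snd (vpair lam mul muh Rw c h n)).
Local Notation Ah n := (fst (vhpair lam mul muh Rw c h n)).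
Local Notation Bh n := (snd (vhpair lam mul muh Rw c h n)).

Lemma A_succ n : A (S n) = stepA (A n) (B n). Proof. reflexivity. Qed.
Lemma B_succ n : B (S n) = stepB (A (S n)). Proof. reflexivity. Qed.
Lemma Ah_succ n : Ah (S n) = stepAh (Ah n) (Bh n). Proof. reflexivity. Qed.
Lemma Bh_succ n : Bh (S n) = stepB (Ah (S n)). Proof. reflexivity. Qed.

Lemma h_nonneg x : 0 <= h x.
Proof. induction x as [|x IH]; [rewrite Hh0; lra|]. specialize (Hhmono x). lra. Qed.

Lemma stepB_concave a : concave_nonincr a -> concave_nonincr (stepB a).
Proof.
  intros Ha x. destruct (Ha x). destruct (Ha (S x)). destruct (Ha (S (S x))).
  unfold stepB. split; destruct_Rmax; lra.
Qed.

(* Concavity survives a step because h is convex and nondecreasing. *)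
Lemma stepA_concave a b :
  concave_nonincr a -> concave_nonincr b -> concave_nonincr (stepA a b).
Proof.
  intros Ha Hb x.
  assert (Hl : 0 <= lam) by lra. assert (Hm : 0 <= mul) by lra.
  assert (Hd : 0 <= muh - mul) by lra.
  destruct x as [|y].
  - destruct (Ha 0%nat) as [A1 A2]. destruct (Hb 0%nat) as [B1 B2].
    pose proof (Rmult_le_compat_l _ _ _ Hl B1). pose proof (Rmult_le_compat_l _ _ _ Hl B2).
    pose proof (Rmult_le_compat_l _ _ _ Hm A1).
    pose proof (Rmult_le_compat_l _ _ _ Hd A1). pose proof (Rmult_le_compat_l _ _ _ Hd A2).
    pose proof (Hhmono 0%nat). pose proof (Hhconv 0%nat).
    unfold stepA. split; destruct_Rmax; lra.
  - destruct (Ha y) as [A1 A2]. destruct (Ha (S y)) as [A3 A4]. destruct (Hb (S y)) as [B1 B2].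
    pose proof (Rmult_le_compat_l _ _ _ Hl B1). pose proof (Rmult_le_compat_l _ _ _ Hl B2).
    pose proof (Rmult_le_compat_l _ _ _ Hm A1). pose proof (Rmult_le_compat_l _ _ _ Hm A2).
    pose proof (Rmult_le_compat_l _ _ _ Hd A1). pose proof (Rmult_le_compat_l _ _ _ Hd A2).
    pose proof (Rmult_le_compat_l _ _ _ Hd A3). pose proof (Rmult_le_compat_l _ _ _ Hd A4).
    pose proof (Hhmono (S y)). pose proof (Hhconv (S y)).
    unfold stepA. split; destruct_Rmax; lra.
Qed.

Lemma stepB_decrements a ah : decrements_le a ah -> decrements_le (stepB a) (stepB ah).
Proof. intros H x. pose proof (H x). pose proof (H (S x)). unfold stepB. destruct_Rmax; lra. Qed.

(* Concavity of a guarantees that the extra option of fast service in the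
   combined problem does not enlarge its decrements beyond those of vh. *)
Lemma stepA_decrements a b ah bh :
  concave_nonincr a -> decrements_le a ah -> decrements_le b bh ->
  decrements_le (stepA a b) (stepAh ah bh).
Proof.
  intros Ha Hah Hbh x.
  assert (Hl : 0 <= lam) by lra. assert (Hm : 0 <= mul) by lra.
  assert (Hd : 0 <= muh - mul) by lra.
  destruct x as [|y].
  - pose proof (Rmult_le_compat_l _ _ _ Hl (Hbh 0%nat)).
    pose proof (Rmult_le_compat_l _ _ _ Hd (Hah 0%nat)). destruct (Ha 0%nat) as [A1 _].
    pose proof (Rmult_le_compat_l _ _ _ Hd A1).
    unfold stepA, stepAh; cbv beta iota. destruct_Rmax; lra.
  - pose proof (Rmult_le_compat_l _ _ _ Hl (Hbh (S y))).
    pose proof (Rmult_le_compat_l _ _ _ Hd (Hah (S y))).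
    pose proof (Rmult_le_compat_l _ _ _ Hm (Hah y)).
    destruct (Ha y) as [A1 A2].
    pose proof (Rmult_le_compat_l _ _ _ Hd A1). pose proof (Rmult_le_compat_l _ _ _ Hd A2).
    unfold stepA, stepAh; cbv beta iota. destruct_Rmax; lra.
Qed.

Lemma stepB_dominated a ah : dominated ah a -> dominated (stepB ah) (stepB a).
Proof. intros H x. pose proof (H x). pose proof (H (S x)). unfold stepB. destruct_Rmax; lra. Qed.

Lemma stepA_dominated a b ah bh :
  dominated ah a -> dominated bh b -> dominated (stepAh ah bh) (stepA a b).
Proof.
  intros Ha Hb x.
  assert (Hl : 0 <= lam) by lra. assert (Hm : 0 <= mul) by lra.
  assert (Hd : 0 <= muh - mul) by lra. assert (Hh : 0 <= muh) by lra.
  destruct x as [|y].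
  - pose proof (Rmult_le_compat_l _ _ _ Hl (Hb 0%nat)).
    pose proof (Rmult_le_compat_l _ _ _ Hh (Ha 0%nat)).
    unfold stepA, stepAh; cbv beta iota. lra.
  - pose proof (Rmult_le_compat_l _ _ _ Hl (Hb (S y))).
    pose proof (Rmult_le_compat_l _ _ _ Hm (Ha y)).
    pose proof (Rmult_le_compat_l _ _ _ Hd (Ha (S y))).
    unfold stepA, stepAh; cbv beta iota. destruct_Rmax; lra.
Qed.

Lemma vpair_concave n : concave_nonincr (A n) /\ concave_nonincr (B n).
Proof.
  induction n as [|n [Ha Hb]].
  - split; intro x; simpl; lra.
  - rewrite B_succ, A_succ.
    assert (HA : concave_nonincr (stepA (A n) (B n))) by (apply stepA_concave; assumption).
    split; [exact HA|apply stepB_concave, HA].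
Qed.

Lemma vpair_compare n :
  decrements_le (A n) (Ah n) /\ decrements_le (B n) (Bh n) /\
  dominated (Ah n) (A n) /\ dominated (Bh n) (B n).
Proof.
  induction n as [|n (Hda & Hdb & Hma & Hmb)].
  - repeat split; intro x; simpl; lra.
  - rewrite B_succ, A_succ, Bh_succ, Ah_succ.
    assert (HD : decrements_le (stepA (A n) (B n)) (stepAh (Ah n) (Bh n)))
      by (apply stepA_decrements; [apply vpair_concave|..]; assumption).
    assert (HM : dominated (stepAh (Ah n) (Bh n)) (stepA (A n) (B n)))
      by (apply stepA_dominated; assumption).
    repeat split; [exact HD|apply stepB_decrements, HD|exact HM|apply stepB_dominated, HM].
Qed.

Lemma vpair_upper (K : R) :
  0 <= K -> lam * (Rw + K) + muh * K <= K ->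
  forall n, (forall x, A n x <= K) /\ (forall x, B n x <= Rw + K).
Proof.
  intros HK HK2 n.
  assert (Hl : 0 <= lam) by lra. assert (Hm : 0 <= mul) by lra.
  assert (Hd : 0 <= muh - mul) by lra. assert (Hh : 0 <= muh) by lra.
  induction n as [|n [Ha Hb]].
  - split; intro x; simpl; lra.
  - rewrite B_succ, A_succ.
    assert (HA : forall x, stepA (A n) (B n) x <= K).
    { intros [|y].
      - pose proof (Rmult_le_compat_l _ _ _ Hl (Hb 0%nat)).
        pose proof (Rmult_le_compat_l _ _ _ Hh (Ha 0%nat)).
        unfold stepA; cbv beta iota. lra.
      - pose proof (Rmult_le_compat_l _ _ _ Hl (Hb (S y))).
        pose proof (Rmult_le_compat_l _ _ _ Hm (Ha y)).
        pose proof (Rmult_le_compat_l _ _ _ Hd (Ha (S y))).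
        pose proof (Rmult_le_compat_l _ _ _ Hd (Ha y)).
        pose proof (h_nonneg (S y)).
        unfold stepA; cbv beta iota. destruct_Rmax; lra. }
    split; [exact HA|]. intro x. pose proof (HA x). pose proof (HA (S x)).
    unfold stepB. destruct_Rmax; lra.
Qed.

Lemma vhpair_lower (L : R) :
  0 <= L -> 1 + (lam + muh) * L <= L ->
  forall n, (forall x, - (L * h x) <= Ah n x) /\ (forall x, - (L * h x) <= Bh n x).
Proof.
  intros HL HL2 n.
  assert (Hl : 0 <= lam) by lra. assert (Hm : 0 <= mul) by lra.
  assert (Hd : 0 <= muh - mul) by lra. assert (Hh : 0 <= muh) by lra.
  induction n as [|n [Ha Hb]].
  - split; intro x; simpl; pose proof (Rmult_le_pos _ _ HL (h_nonneg x)); lra.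
  - rewrite Bh_succ, Ah_succ.
    assert (HA : forall x, - (L * h x) <= stepAh (Ah n) (Bh n) x).
    { intros [|y].
      - pose proof (Rmult_le_compat_l _ _ _ Hl (Hb 0%nat)).
        pose proof (Rmult_le_compat_l _ _ _ Hh (Ha 0%nat)).
        unfold stepAh; cbv beta iota. rewrite Hh0 in *. lra.
      - pose proof (Rmult_le_compat_l _ _ _ Hl (Hb (S y))).
        pose proof (Rmult_le_compat_l _ _ _ Hm (Ha y)).
        pose proof (Rmult_le_compat_l _ _ _ Hd (Ha (S y))).
        pose proof (Rmult_le_compat_l _ _ _ Hm
                      (Rmult_le_compat_l _ _ _ HL (Hhmono y))).
        pose proof (Rmult_le_compat_l _ _ _ (h_nonneg (S y)) HL2).
        unfold stepAh; cbv beta iota. lra. }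
    split; [exact HA|]. intro x. pose proof (HA x).
    unfold stepB. destruct_Rmax; lra.
Qed.

Variables (v vh : nat -> bool -> R).
Hypothesis Hv : forall x i, Un_cv (fun n => vn lam mul muh Rw c h n x i) (v x i).
Hypothesis Hvh : forall x i, Un_cv (fun n => vhn lam mul muh Rw c h n x i) (vh x i).

Lemma cvA x : Un_cv (fun n => A n x) (v x false). Proof. exact (Hv x false). Qed.
Lemma cvB x : Un_cv (fun n => B n x) (v x true). Proof. exact (Hv x true). Qed.
Lemma cvAh x : Un_cv (fun n => Ah n x) (vh x false). Proof. exact (Hvh x false). Qed.
Lemma cvBh x : Un_cv (fun n => Bh n x) (vh x true). Proof. exact (Hvh x true). Qed.

(* The error v - vh grows at most linearly in h: v <= K and vh >= -L h in the
   limit, with K = lam R / beta and L = 1 / beta. *)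
Lemma limit_growth : exists K L, 0 <= L /\ forall x, v x false - vh x false <= K + L * h x.
Proof.
  set (K := lam * Rw / beta). set (L := / beta).
  assert (HL : 0 <= L) by (left; apply Rinv_0_lt_compat; lra).
  assert (HK : 0 <= K) by (unfold K, Rdiv; apply Rmult_le_pos; [apply Rmult_le_pos; lra|exact HL]).
  assert (HK2 : lam * (Rw + K) + muh * K <= K).
  { assert (beta * K = lam * Rw) by (unfold K; field; lra).
    assert (K = (lam + muh + beta) * K) by (rewrite Hnorm; ring). lra. }
  assert (HL2 : 1 + (lam + muh) * L <= L).
  { assert (beta * L = 1) by (unfold L; field; lra).
    assert (L = (lam + muh + beta) * L) by (rewrite Hnorm; ring). lra. }
  exists K, L. split; [exact HL|]. intro x.
  assert (v x false <= K).
  { eapply Rle_cv_lim; [|apply cvA|apply cv_const].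
    intro n. exact (proj1 (vpair_upper K HK HK2 n) x). }
  assert (- (L * h x) <= vh x false).
  { eapply Rle_cv_lim; [|apply cv_const|apply cvAh].
    intro n. exact (proj1 (vhpair_lower L HL HL2 n) x). }
  lra.
Qed.

Lemma value_facts : ValueFacts lam mul muh Rw c h v vh.
Proof.
  constructor.
  - intro x. eapply Rle_cv_lim;
      [|apply CV_minus; apply cvA|apply CV_minus; apply cvA].
    intro n. exact (proj2 (proj1 (vpair_concave n) x)).
  - intro x. eapply Rle_cv_lim;
      [|apply CV_minus; apply cvA|apply CV_minus; apply cvAh].
    intro n. exact (proj1 (vpair_compare n) x).
  - intro x. eapply Rle_cv_lim; [|apply cvAh|apply cvA].
    intro n. exact (proj1 (proj2 (proj2 (vpair_compare n))) x).
  - intro x. eapply Rle_cv_lim; [|apply cvBh|apply cvB].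
    intro n. exact (proj2 (proj2 (proj2 (vpair_compare n))) x).
  - exact limit_growth.
  - intro x. apply (UL_sequence _ _ _ (cv_shift _ _ (cvB x))).
    exact (cv_max _ _ _ _ (CV_plus _ _ _ _ (cv_const Rw) (cv_shift _ _ (cvA (S x))))
                          (cv_shift _ _ (cvA x))).
  - intro x. apply (UL_sequence _ _ _ (cv_shift _ _ (cvBh x))).
    exact (cv_max _ _ _ _ (CV_plus _ _ _ _ (cv_const Rw) (cv_shift _ _ (cvAh (S x))))
                          (cv_shift _ _ (cvAh x))).
  - apply (UL_sequence _ _ _ (cv_shift _ _ (cvA 0%nat))).
    exact (CV_plus _ _ _ _ (cv_scal lam _ _ (cvB 0%nat)) (cv_scal muh _ _ (cvA 0%nat))).
  - apply (UL_sequence _ _ _ (cv_shift _ _ (cvAh 0%nat))).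
    exact (CV_plus _ _ _ _ (cv_scal lam _ _ (cvBh 0%nat)) (cv_scal muh _ _ (cvAh 0%nat))).
  - intro y. apply (UL_sequence _ _ _ (cv_shift _ _ (cvA (S y)))).
    exact (CV_plus _ _ _ _
             (CV_plus _ _ _ _ (CV_plus _ _ _ _ (cv_const (- h (S y)))
                (cv_scal lam _ _ (cvB (S y)))) (cv_scal mul _ _ (cvA y)))
             (cv_max _ _ _ _ (cv_scal (muh - mul) _ _ (cvA (S y)))
                (CV_plus _ _ _ _ (cv_const (- c)) (cv_scal (muh - mul) _ _ (cvA y))))).
  - intro y. apply (UL_sequence _ _ _ (cv_shift _ _ (cvAh (S y)))).
    exact (CV_plus _ _ _ _
             (CV_plus _ _ _ _ (CV_plus _ _ _ _ (cv_const (- h (S y)))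
                (cv_scal lam _ _ (cvBh (S y)))) (cv_scal mul _ _ (cvAh y)))
             (cv_scal (muh - mul) _ _ (cvAh (S y)))).
Qed.

End ValueIteration.

Section ErrorAnalysis.

Variables (lam mul muh Rw c beta : R) (h : nat -> R) (v vh : nat -> bool -> R).
Hypotheses (Hlam : 0 < lam) (Hmul : 0 < mul) (Hmulh : mul < muh) (HRw : 0 <= Rw)
  (Hc : 0 < c) (Hbeta : 0 < beta) (Hnorm : lam + muh + beta = 1)
  (HRc : Rw <= c / (muh - mul)).
Hypothesis Hfacts : ValueFacts lam mul muh Rw c h v vh.
(* Assumption 1(2), with the normalization lam + muh + beta = 1. *)
Hypothesis Hshrink : exists (gamma : R) (J : nat), 0 <= gamma /\ gamma < 1 /\ (1 <= J)%nat /\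
  forall x, (lam + muh) ^ J * (Rw + c + h (x + J)%nat) <= gamma * (Rw + c + h x).

Local Notation e x := (v x false - vh x false).
Local Notation e1 x := (v x true - vh x true).
Local Notation Delta x := (v x false - v (S x) false).

Lemma err_nonneg x : 0 <= e x.
Proof. pose proof (vf_dom0 _ _ _ _ _ _ _ _ Hfacts x). lra. Qed.

Lemma err1_nonneg x : 0 <= e1 x.
Proof. pose proof (vf_dom1 _ _ _ _ _ _ _ _ Hfacts x). lra. Qed.

Lemma err_nondecr x y : (x <= y)%nat -> e x <= e y.
Proof.
  induction 1 as [|y _ IH]; [lra|].
  pose proof (vf_decrements _ _ _ _ _ _ _ _ Hfacts y). lra.
Qed.

Lemma Delta_nondecr x : Delta x <= Delta (S x).
Proof. exact (vf_concave _ _ _ _ _ _ _ _ Hfacts x). Qed.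

(* Admitting moves the error to the next state, rejecting keeps it. *)
Lemma err1_le_next x : e1 x <= e (S x).
Proof.
  rewrite (vf_admit _ _ _ _ _ _ _ _ Hfacts), (vf_admit_h _ _ _ _ _ _ _ _ Hfacts).
  pose proof (err_nondecr x (S x) ltac:(lia)). destruct_Rmax; lra.
Qed.

(* Where Delta(x) > R, rejection is optimal in the combined problem. *)
Lemma err1_le_err_reject x : Rw < Delta x -> e1 x <= e x.
Proof.
  intros Hx.
  rewrite (vf_admit _ _ _ _ _ _ _ _ Hfacts), (vf_admit_h _ _ _ _ _ _ _ _ Hfacts).
  destruct_Rmax; lra.
Qed.

(* Where Delta(y) <= c/delta, slow service is optimal at y+1, so the combined
   problem and the subproblem share the same Bellman equation there. *)
Lemma err_slow y : Delta y <= c / (muh - mul) ->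
  e (S y) = lam * e1 (S y) + mul * e y + (muh - mul) * e (S y).
Proof.
  intros Hy.
  assert (Hslow : (muh - mul) * Delta y <= c).
  { apply (Rmult_le_compat_l (muh - mul)) in Hy; [|lra].
    replace ((muh - mul) * (c / (muh - mul))) with c in Hy by (field; lra). exact Hy. }
  rewrite (vf_busy _ _ _ _ _ _ _ _ Hfacts y) at 1.
  rewrite Rmax_left by lra.
  rewrite (vf_busy_h _ _ _ _ _ _ _ _ Hfacts y) at 1. ring.
Qed.

Lemma err_empty : e 0%nat = lam * e1 0%nat + muh * e 0%nat.
Proof.
  rewrite (vf_empty _ _ _ _ _ _ _ _ Hfacts) at 1.
  rewrite (vf_empty_h _ _ _ _ _ _ _ _ Hfacts) at 1. ring.
Qed.

(* Discounting: a nonnegative error bounded by (lam + muh) times itself is 0. *)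
Lemma err_fixed_zero x : e x <= (lam + muh) * e x -> e x = 0.
Proof.
  intros Hx. pose proof (err_nonneg x).
  replace (lam + muh) with (1 - beta) in Hx by lra.
  apply Rle_antisym; nra.
Qed.

Lemma err_zero_upto x0 :
  Rw < Delta x0 -> (forall k, x0 = S k -> Delta k <= c / (muh - mul)) ->
  forall x, (x <= x0)%nat -> e x = 0 /\ e1 x = 0.
Proof.
  intros Hrej Hbelow.
  pose proof (Rmult_le_compat_l lam _ _ (Rlt_le _ _ Hlam) (err1_le_err_reject x0 Hrej)).
  assert (Hzero : e x0 = 0).
  { apply err_fixed_zero. destruct x0 as [|k].
    - rewrite err_empty at 1. lra.
    - rewrite (err_slow k (Hbelow k eq_refl)) at 1.
      pose proof (Rmult_le_compat_l mul _ _ (Rlt_le _ _ Hmul) (err_nondecr k (S k) ltac:(lia))).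
      lra. }
  intros x Hx. pose proof (err_nondecr x x0 Hx). pose proof (err_nonneg x).
  pose proof (err1_nonneg x). split; [lra|].
  destruct (Nat.eq_dec x x0) as [->|Hne].
  - pose proof (err1_le_err_reject x0 Hrej). lra.
  - pose proof (err1_le_next x). pose proof (err_nondecr (S x) x0 ltac:(lia)). lra.
Qed.

Lemma err_backward_step :
  (forall y, Delta y <= c / (muh - mul)) -> forall y, e y <= (lam + muh) * e (S y).
Proof.
  intros Hslow y. apply (ratio_bound lam muh beta); try lra; [apply err_nonneg|].
  replace beta with (1 - lam - muh) by lra.
  pose proof (Rmult_le_compat_l lam _ _ (Rlt_le _ _ Hlam) (err1_le_next y)).
  destruct y as [|w].
  - pose proof err_empty. lra.
  - pose proof (err_slow w (Hslow w)).
    pose proof (Rmult_le_compat_l mul _ _ (Rlt_le _ _ Hmul) (err_nondecr w (S w) ltac:(lia))).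
    lra.
Qed.

(* Geometric growth is incompatible with the linear growth of the error in h
   under Assumption 1(2): the error vanishes. *)
Lemma err_zero_everywhere :
  (forall y, Delta y <= c / (muh - mul)) -> forall x, e x = 0.
Proof.
  intros Hslow x.
  destruct Hshrink as (gamma & J & Hg0 & Hg1 & HJ & HJshrink).
  destruct (vf_growth _ _ _ _ _ _ _ _ Hfacts) as (K & L & HL & Hgrowth).
  assert (Hrho : 0 <= lam + muh < 1) by lra.
  pose proof (backward_recursion_nonpos (fun x => e x) h (lam + muh) gamma (Rw + c) K L J
                ltac:(lra) (proj2 (pow_lt_1_compat (lam + muh) J Hrho ltac:(lia)))
                (conj Hg0 Hg1) ltac:(lra) HL (err_backward_step Hslow) Hgrowth HJshrink x).
  pose proof (err_nonneg x). lra.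
Qed.

Local Notation Bs := (ext_add1 (T_thr (fun x => Delta x) (c / (muh - mul)))).

Lemma err_zero_below_Bs x : nat_le_ext x Bs -> e x = 0 /\ e1 x = 0.
Proof.
  pose proof (T_thr_spec (fun x => Delta x) (c / (muh - mul))) as HT.
  destruct (T_thr (fun x => Delta x) (c / (muh - mul))) as [z|]; simpl; intros Hx.
  - destruct HT as [[-> Hall]|(k & -> & Hk & Hj)].
    + apply (err_zero_upto 0%nat); [specialize (Hall 0%nat); lra|discriminate|lia].
    + apply (err_zero_upto (S k)); [specialize (Hj (S k) ltac:(lia)); lra| |lia].
      intros k' Hk'. injection Hk' as <-. exact Hk.
  - pose proof (err_zero_everywhere (is_T_inf_bounded _ _ Delta_nondecr HT)) as Hzero.
    split; [apply Hzero|]. pose proof (err1_le_next x). pose proof (err1_nonneg x).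
    specialize (Hzero (S x)). lra.
Qed.

(* The admission thresholds of the two problems coincide: the decrements of vh
   dominate those of v and agree with them wherever Delta <= R <= c/delta. *)
Lemma admission_thresholds_agree :
  T_thr (fun x => vh x false - vh (S x) false) Rw = T_thr (fun x => Delta x) Rw.
Proof.
  apply T_thr_eq, (is_T_transfer (fun x => Delta x)); [|intros x Hx|apply T_thr_spec].
  - exact (vf_decrements _ _ _ _ _ _ _ _ Hfacts).
  - assert (Hx' : nat_le_ext x (T_thr (fun x => Delta x) (c / (muh - mul))))
      by (apply (is_T_below (fun x => Delta x) (c / (muh - mul))); [apply T_thr_spec|lra]).
    pose proof (err_zero_below_Bs x (nat_le_ext_pred _ _ (nat_le_ext_succ _ _ Hx'))).
    pose proof (err_zero_below_Bs (S x) (nat_le_ext_succ _ _ Hx')).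
    simpl. lra.
Qed.

End ErrorAnalysis.

Theorem theorem4
  (lam mul muh Rw c beta : R) (h : nat -> R)
  (Hlam : 0 < lam) (Hmul : 0 < mul) (Hmulh : mul < muh)
  (HRw : 0 <= Rw) (Hc : 0 < c) (Hbeta : 0 < beta)
  (Hnorm : (lam + muh) + beta = 1)
  (Hh0 : h 0%nat = 0)
  (Hhmono : forall x : nat, h x <= h (S x))
  (Hhconv : forall x : nat, h (S x) - h x <= h (S (S x)) - h (S x))
  (HA1 : exists theta : R, 1 < theta /\
           forall x : nat, (0 < x)%nat -> h (S x) <= theta * h x)
  (HA2 : exists (gamma : R) (J : nat), 0 <= gamma /\ gamma < 1 /\ (1 <= J)%nat /\
           forall x : nat,
             ((lam + muh) / ((lam + muh) + beta)) ^ J * (Rw + c + h (x + J)%nat)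
             <= gamma * (Rw + c + h x))
  (v vh : nat -> bool -> R)
  (Hv : forall x i, Un_cv (fun n => vn lam mul muh Rw c h n x i) (v x i))
  (Hvh : forall x i, Un_cv (fun n => vhn lam mul muh Rw c h n x i) (vh x i))
  (HRc : Rw <= c / (muh - mul)) :
  let Delta := fun x : nat => v x false - v (S x) false in
  let Deltah := fun x : nat => vh x false - vh (S x) false in
  let Bs := ext_add1 (T_thr Delta (c / (muh - mul))) in
  let Bd := T_thr Delta Rw in
  let Bhd := T_thr Deltah Rw in
  Bhd = Bd /\
  (forall (i : bool) (x : nat), nat_le_ext x Bs -> v x i - vh x i = 0).
Proof.
  intros Delta Deltah Bs Bd Bhd.
  pose proof (value_facts lam mul muh Rw c beta h Hlam Hmul Hmulh HRw Hc Hbeta Hnorm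
                Hh0 Hhmono Hhconv v vh Hv Hvh) as Hfacts.
  rewrite Hnorm, Rdiv_1_r in HA2.
  split.
  - exact (admission_thresholds_agree lam mul muh Rw c beta h v vh Hlam Hmul Hmulh HRw Hc
             Hbeta Hnorm HRc Hfacts HA2).
  - intros i x Hx.
    destruct (err_zero_below_Bs lam mul muh Rw c beta h v vh Hlam Hmul Hmulh HRw Hc
                Hbeta Hnorm HRc Hfacts HA2 x Hx).
    destruct i; assumption.
Qed.
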